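(* For every $d\in\mathbb N$, the Hamming graph $H(d,3)$ has no quantum symmetry, i.e. $C(G_{aut}^+(H(d,3)))$ is commutative.
   Context: The Hamming graph $H(d,q)$ has vertex set $\{1,\dots,q\}^d$, two vertices being adjacent iff they differ in exactly one coordinate. For a finite simple undirected graph $\Gamma=(V,E)$ with $V=\{1,\dots,n\}$, $C(G_{aut}^+(\Gamma))$ is the universal unital $C^*$-algebra generated by $u_{ij}$, $1\le i,j\le n$, with relations: (R1) $u_{ij}=u_{ij}^*=u_{ij}^2$; (R2) $\sum_{l} u_{il}=1=\sum_{l} u_{li}$ for all $i$; (R3) $u_{ij}u_{kl}=u_{kl}u_{ij}=0$ whenever exactly one of $(i,k)\in E$, $(j,l)\in E$ holds. $\Gamma$ has no quantum symmetry if $C(G_{aut}^+(\Gamma))$ is commutative. *)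

From Stdlib Require Import Reals.
From mathcomp Require Import all_boot.
Set Implicit Arguments. Unset Strict Implicit. Unset Printing Implicit Defensive.

Record Cplx := mkC { Cre : R; Cim : R }.
Definition C0 : Cplx := mkC R0 R0.
Definition C1 : Cplx := mkC R1 R0.
Definition Cadd (a b : Cplx) : Cplx := mkC (Rplus (Cre a) (Cre b)) (Rplus (Cim a) (Cim b)).
Definition Cmul (a b : Cplx) : Cplx :=
  mkC (Rminus (Rmult (Cre a) (Cre b)) (Rmult (Cim a) (Cim b)))
      (Rplus (Rmult (Cre a) (Cim b)) (Rmult (Cim a) (Cre b))).
Definition Cconj (a : Cplx) : Cplx := mkC (Cre a) (Ropp (Cim a)).
Definition Cmod (a : Cplx) : R := sqrt (Rplus (Rmult (Cre a) (Cre a)) (Rmult (Cim a) (Cim a))).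

Record CStarAlgebra := {
  cs_car :> Type;
  cs_zero : cs_car;
  cs_one : cs_car;
  cs_add : cs_car -> cs_car -> cs_car;
  cs_opp : cs_car -> cs_car;
  cs_mul : cs_car -> cs_car -> cs_car;
  cs_scal : Cplx -> cs_car -> cs_car;
  cs_star : cs_car -> cs_car;
  cs_norm : cs_car -> R;
  cs_addA : forall x y z, cs_add x (cs_add y z) = cs_add (cs_add x y) z;
  cs_addC : forall x y, cs_add x y = cs_add y x;
  cs_add0 : forall x, cs_add x cs_zero = x;
  cs_addN : forall x, cs_add x (cs_opp x) = cs_zero;
  cs_scalDl : forall a b x, cs_scal (Cadd a b) x = cs_add (cs_scal a x) (cs_scal b x);
  cs_scalDr : forall a x y, cs_scal a (cs_add x y) = cs_add (cs_scal a x) (cs_scal a y);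
  cs_scalA : forall a b x, cs_scal (Cmul a b) x = cs_scal a (cs_scal b x);
  cs_scal1 : forall x, cs_scal C1 x = x;
  cs_mulA : forall x y z, cs_mul x (cs_mul y z) = cs_mul (cs_mul x y) z;
  cs_mul1l : forall x, cs_mul cs_one x = x;
  cs_mul1r : forall x, cs_mul x cs_one = x;
  cs_mulDl : forall x y z, cs_mul (cs_add x y) z = cs_add (cs_mul x z) (cs_mul y z);
  cs_mulDr : forall x y z, cs_mul x (cs_add y z) = cs_add (cs_mul x y) (cs_mul x z);
  cs_scal_mull : forall a x y, cs_mul (cs_scal a x) y = cs_scal a (cs_mul x y);
  cs_scal_mulr : forall a x y, cs_mul x (cs_scal a y) = cs_scal a (cs_mul x y);
  cs_starK : forall x, cs_star (cs_star x) = x;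
  cs_starD : forall x y, cs_star (cs_add x y) = cs_add (cs_star x) (cs_star y);
  cs_starM : forall x y, cs_star (cs_mul x y) = cs_mul (cs_star y) (cs_star x);
  cs_starZ : forall a x, cs_star (cs_scal a x) = cs_scal (Cconj a) (cs_star x);
  cs_norm_eq0 : forall x, cs_norm x = R0 -> x = cs_zero;
  cs_normD : forall x y, Rle (cs_norm (cs_add x y)) (Rplus (cs_norm x) (cs_norm y));
  cs_normZ : forall a x, cs_norm (cs_scal a x) = Rmult (Cmod a) (cs_norm x);
  cs_normM : forall x y, Rle (cs_norm (cs_mul x y)) (Rmult (cs_norm x) (cs_norm y));
  cs_cstar : forall x, cs_norm (cs_mul (cs_star x) x) = Rmult (cs_norm x) (cs_norm x);
  cs_complete : forall s : nat -> cs_car,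
    (forall eps, Rlt R0 eps -> exists N, forall m n, (N <= m)%coq_nat -> (N <= n)%coq_nat ->
        Rlt (cs_norm (cs_add (s m) (cs_opp (s n)))) eps) ->
    exists l, forall eps, Rlt R0 eps -> exists N, forall n, (N <= n)%coq_nat ->
        Rlt (cs_norm (cs_add (s n) (cs_opp l))) eps
}.

Definition qaut_relations (V : finType) (E : rel V) (A : CStarAlgebra)
    (u : V -> V -> A) : Prop :=
  (forall i j, cs_star (u i j) = u i j /\ cs_mul (u i j) (u i j) = u i j) /\
  (forall i, \big[@cs_add A/cs_zero A]_(l : V) u i l = cs_one A /\
             \big[@cs_add A/cs_zero A]_(l : V) u l i = cs_one A) /\
  (forall i j k l, (E i k) (+) (E j l) ->
     cs_mul (u i j) (u k l) = cs_zero A /\ cs_mul (u k l) (u i j) = cs_zero A).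

(* Gamma has no quantum symmetry: the universal unital C*-algebra
   C(G_aut^+(Gamma)) generated by the u_ij subject to (R1)-(R3) is
   commutative.  By the universal property, this algebra is commutative
   iff its generators commute, iff in every unital C*-algebra A every
   family (u_ij) satisfying (R1)-(R3) consists of pairwise commuting
   elements. *)
Definition no_quantum_symmetry (V : finType) (E : rel V) : Prop :=
  forall (A : CStarAlgebra) (u : V -> V -> A), qaut_relations E u ->
    forall i j k l, cs_mul (u i j) (u k l) = cs_mul (u k l) (u i j).

Definition hamming_vertex (d q : nat) : finType := {ffun 'I_d -> 'I_q}.
Definition hamming_adj (d q : nat) : rel (hamming_vertex d q) :=
  fun x y => #|[set i : 'I_d | x i != y i]| == 1.
Arguments hamming_adj d q : clear implicits.

From Stdlib Require Import Reals.
From mathcomp Require Import all_boot zify.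
From HB Require Import structures.
From mathcomp Require Import ssralg boolp.
Set Implicit Arguments. Unset Strict Implicit. Unset Printing Implicit Defensive.
Import GRing.Theory.

(* Let u be a magic unitary for H(d,3) in a C*-algebra. Inserting a row sum
   along a geodesic shows u_ij u_kl = 0 unless d(i,k) = d(j,l). We then show
   that u_ij and u_kl commute by strong induction on m = d(i,k) = d(j,l), in the
   form u_ij u_kl u_is = 0 for s <> j: this gives u_ij u_kl = u_ij u_kl u_ij,
   and such self-adjoint elements commute.
   For m = 1, let p, q be common neighbours of i, k and of j, l. Since adjacent
   vertices of H(d,3) have a unique common neighbour, u_kl u_pq u_ij = u_kl u_ij
   and u_pq u_kl u_ij = u_pq u_ij, so the C*-identity gives
   u_ij u_kl = u_ij u_pq; then u_ij u_kl u_is = 0 unless s is a common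
   neighbour of l and q, i.e. s = j.
   For m >= 2, take two distinct neighbours p1, p2 of i closer to k. The rows
   of p1 and p2 commute with u_ij u_kl u_is by induction, and they annihilate
   it except on columns t, t' that are common neighbours of j and s closer to
   l; two distinct such columns force s = j. *)

Section HammingGraph.
Variables d q : nat.
Local Notation V := (hamming_vertex d q).
Local Notation E := (hamming_adj d q).
Implicit Types (x y z s t : V) (c e : 'I_d).

Definition hdiff x y : {set 'I_d} := [set c | x c != y c].
Definition hdist x y : nat := #|hdiff x y|.

Lemma hamming_adjE x y : E x y = (hdist x y == 1).
Proof. by []. Qed.

Lemma hdist_adj x y : E x y -> hdist x y = 1.
Proof. by move/eqP. Qed.

Lemma in_hdiff x y c : (c \in hdiff x y) = (x c != y c).
Proof. by rewrite inE. Qed.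

Lemma hdistC x y : hdist x y = hdist y x.
Proof.
by rewrite /hdist; congr #|pred_of_set _|; apply/setP => c; rewrite !in_hdiff eq_sym.
Qed.

Lemma hamming_adj_sym : symmetric E.
Proof. by move=> x y; rewrite !hamming_adjE hdistC. Qed.

Lemma hdist_eq0 x y : (hdist x y == 0) = (x == y).
Proof.
apply/idP/eqP => [|<-]; last by rewrite cards_eq0; apply/eqP/setP => c; rewrite !inE eqxx.
rewrite cards_eq0 => /eqP/setP xy; apply/ffunP => c.
by apply/eqP/negbFE; rewrite -in_hdiff xy inE.
Qed.

Lemma hdistxx x : hdist x x = 0.
Proof. by apply/eqP; rewrite hdist_eq0. Qed.

Lemma hamming_adj_irr : irreflexive E.
Proof. by move=> x; rewrite hamming_adjE hdistxx. Qed.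

Lemma hdist_gt1 x y c e : c != e -> x c != y c -> x e != y e -> 1 < hdist x y.
Proof. by move=> ce xyc xye; apply/card_gt1P; exists c, e; rewrite !in_hdiff. Qed.

Definition upd x c (v : 'I_q) : V := [ffun c' => if c' == c then v else x c'].

Lemma upd_at x c v : upd x c v c = v.
Proof. by rewrite ffunE eqxx. Qed.

Lemma upd_off x c v e : e != c -> upd x c v e = x e.
Proof. by rewrite ffunE => /negbTE ->. Qed.

Lemma updK x c v w : upd (upd x c v) c w = upd x c w.
Proof. by apply/ffunP => e; rewrite !ffunE; case: eqP. Qed.

Lemma hdist_upd x c v y : hdist (upd x c v) y + (x c != y c) = hdist x y + (v != y c).
Proof.
have off_c : hdiff (upd x c v) y :\ c = hdiff x y :\ c.
  by apply/setP => e; rewrite !inE; case: eqVneq => // ec; rewrite upd_off.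
rewrite /hdist (cardsD1 c (hdiff x y)) (cardsD1 c (hdiff _ y)) off_c !in_hdiff upd_at.
by rewrite addnAC [RHS]addnAC; congr (_ + _); exact: addnC.
Qed.

Lemma hamming_adj_upd x c v : E x (upd x c v) = (v != x c).
Proof.
have := hdist_upd x c v x; rewrite hdistxx eqxx addn0 add0n hamming_adjE hdistC => ->.
by case: (v != x c).
Qed.

Lemma hamming_adjP x y : reflect (exists2 c, y c != x c & y = upd x c (y c)) (E x y).
Proof.
apply: (iffP idP) => [/cards1P [c] | [c yxc yE]]; last by rewrite yE hamming_adj_upd.
rewrite -/(hdiff x y) => xy; have := in_hdiff x y c.
rewrite xy set11 eq_sym => /esym yxc; exists c => //.
apply/ffunP => e; rewrite ffunE; case: eqVneq => [-> //|ec].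
by apply/eqP/negbFE; rewrite eq_sym -in_hdiff xy inE (negbTE ec).
Qed.

Lemma hdist_adj_le x y z : E x y -> hdist y z <= (hdist x z).+1.
Proof.
move=> /hamming_adjP [c _ ->]; have := hdist_upd x c (y c) z.
by case: (_ != _); case: (_ != _); lia.
Qed.

Lemma hdist_upd_toward x z c : x c != z c -> (hdist (upd x c (z c)) z).+1 = hdist x z.
Proof. by move=> xzc; have := hdist_upd x c (z c) z; rewrite xzc eqxx addn1 addn0. Qed.

Lemma exists_closer_neighbour x z :
  0 < hdist x z -> exists2 p, E x p & (hdist p z).+1 = hdist x z.
Proof.
move=> /card_gt0P [c]; rewrite in_hdiff => xzc.
by exists (upd x c (z c)); rewrite ?hamming_adj_upd 1?eq_sym ?hdist_upd_toward.
Qed.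

Lemma two_closer_neighbours x z : 1 < hdist x z ->
  exists p1 p2, [/\ p1 != p2, E x p1, E x p2,
                    (hdist p1 z).+1 = hdist x z & (hdist p2 z).+1 = hdist x z].
Proof.
move=> /card_gt1P [c1 [c2 []]]; rewrite !in_hdiff => xzc1 xzc2 c12.
exists (upd x c1 (z c1)), (upd x c2 (z c2)).
rewrite !hamming_adj_upd ![_ == x _]eq_sym xzc1 xzc2 !hdist_upd_toward //; split=> //.
apply: contra xzc1 => /eqP/ffunP/(_ c1); rewrite upd_at upd_off // => <-.
by rewrite eqxx.
Qed.

Lemma closer_neighbour_upd x y z : E x y -> (hdist y z).+1 = hdist x z ->
  exists2 c, x c != z c & y = upd x c (z c).
Proof.
move=> /hamming_adjP [c yxc ->] closer; exists c.
- apply/negP => /eqP xzc; have := hdist_upd x c (y c) z.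
  by rewrite xzc eqxx; case: (_ != _); lia.
- have := hdist_upd x c (y c) z; rewrite -closer.
  by case: (y c =P z c) => [-> //|_]; case: (_ != _); lia.
Qed.

(* The common neighbours of t = j[c := l c] and t' = j[c' := l c'] are j and
   j[c, c' := l c, l c'], and the latter is two steps closer to l than j. *)
Lemma eq_of_closer_common_neighbours j s l t t' :
  t != t' -> hdist s l = hdist j l -> E j t -> E s t -> E j t' -> E s t' ->
  (hdist t l).+1 = hdist j l -> (hdist t' l).+1 = hdist j l -> s = j.
Proof.
move=> tt' sl jt st jt' st' tl t'l.
have [c jlc tE] := closer_neighbour_upd jt tl.
have [c' jlc' t'E] := closer_neighbour_upd jt' t'l.
have cc' : c != c' by apply: contraNneq tt' => cc'; rewrite tE t'E cc'.
rewrite -sl in tl t'l.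
have [e _ tE_s] := closer_neighbour_upd st tl.
have [e' _ t'E_s] := closer_neighbour_upd st' t'l.
have dir c1 c2 e1 e2 t1 t2 : c1 != c2 -> j c1 != l c1 ->
    t1 = upd j c1 (l c1) -> t2 = upd j c2 (l c2) ->
    t1 = upd s e1 (l e1) -> t2 = upd s e2 (l e2) -> e1 = c1.
  move=> c12 jlc1 t1j t2j t1s t2s; apply/eqP; apply: contraNT jlc1 => ec1.
  have sc1 : s c1 = l c1.
    by move/ffunP/(_ c1): t1s; rewrite t1j upd_at upd_off 1?eq_sym.
  move/ffunP/(_ c1): t2s; rewrite t2j upd_off // !ffunE sc1.
  by case: eqP => [-> | _] ->.
have ec := dir _ _ _ _ _ _ cc' jlc tE t'E tE_s t'E_s.
have ec' : e' = c' by apply: (dir _ _ _ _ _ _ _ jlc' t'E tE t'E_s tE_s); rewrite eq_sym.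
apply/ffunP => x; case: (eqVneq x c) => [-> | xc].
  by move/ffunP/(_ c): t'E_s; rewrite t'E ec' !upd_off // => ->.
by move/ffunP/(_ x): tE_s; rewrite tE ec !upd_off // => ->.
Qed.

Lemma exists_other_value (q_gt2 : 2 < q) (a b : 'I_q) : exists2 v, v != a & v != b.
Proof.
have : ~~ ([set: 'I_q] \subset [set a; b]).
  apply/negP => /subset_leq_card; rewrite cardsT card_ord cards2.
  by case: (a != b); lia.
by case/subsetPn => v _; rewrite !inE negb_or => /andP[]; exists v.
Qed.

Lemma exists_common_neighbour (q_gt2 : 2 < q) x y : E x y -> exists t, E x t && E y t.
Proof.
move=> /hamming_adjP [c _ yE]; have [v vx vy] := exists_other_value q_gt2 (x c) (y c).
exists (upd x c v); rewrite hamming_adj_upd vx /=.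
by rewrite -(updK x c (y c)) -yE hamming_adj_upd.
Qed.

Lemma hamming_twin_free (q_gt2 : 2 < q) x y : x != y -> exists t, E x t != E y t.
Proof.
move=> xy; case xyE: (E x y); first by exists y; rewrite xyE hamming_adj_irr.
have /card_gt0P [c] : 0 < hdist x y by rewrite lt0n hdist_eq0.
rewrite in_hdiff => xyc; have [v vx vy] := exists_other_value q_gt2 (x c) (y c).
exists (upd x c v); rewrite hamming_adj_upd vx hamming_adj_sym !hamming_adjE.
by have := hdist_upd x c v y; rewrite xyc vy !addn1 => -[->]; rewrite -hamming_adjE xyE.
Qed.

Lemma common_neighbour_upd x y t c : x c != y c -> E x y -> E x t -> E y t ->
  [/\ t = upd x c (t c), t c != x c & t c != y c].
Proof.
move=> xyc /hamming_adjP [c0 _ yE] /hamming_adjP [e txe tE] yt.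
have c0c : c0 = c by apply: contraNeq xyc => c0c; rewrite yE upd_off 1?eq_sym.
subst c0; have ec : e = c.
  apply: contraTeq yt => ec; rewrite hamming_adjE neq_ltn orbC.
  apply/orP; left; apply: (hdist_gt1 ec).
    by rewrite {1}yE upd_off // eq_sym.
  by rewrite tE upd_off 1?eq_sym.
subst e; split=> //; apply: contraTneq yt => tye.
by rewrite tE tye -yE hamming_adj_irr.
Qed.

End HammingGraph.

Lemma ord3_other_uniq (a b v w : 'I_3) :
  a != b -> v != a -> v != b -> w != a -> w != b -> v = w.
Proof.
move=> ab va vb wa wb; apply/val_inj.
have := ltn_ord a; have := ltn_ord b; have := ltn_ord v; have := ltn_ord w.
move: ab va vb wa wb; rewrite -!(inj_eq val_inj) /=; lia.
Qed.

Lemma hamming3_common_neighbour_uniq d (x y t t' : hamming_vertex d 3) :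
  hamming_adj d 3 x y -> hamming_adj d 3 x t -> hamming_adj d 3 y t ->
  hamming_adj d 3 x t' -> hamming_adj d 3 y t' -> t = t'.
Proof.
move=> xy xt yt xt' yt'; have /hamming_adjP [c yxc _] := xy; rewrite eq_sym in yxc.
have [tE tx ty] := common_neighbour_upd yxc xy xt yt.
have [t'E t'x t'y] := common_neighbour_upd yxc xy xt' yt'.
by rewrite tE t'E (ord3_other_uniq yxc tx ty t'x t'y).
Qed.

(* The carrier of [A] with its ring structure; [\sum] over it unfolds to the
   [\big[cs_add/cs_zero]] of [qaut_relations]. *)
Definition cs_ring (A : CStarAlgebra) : Type := cs_car A.
HB.instance Definition _ (A : CStarAlgebra) := gen_eqMixin (cs_ring A).
HB.instance Definition _ (A : CStarAlgebra) := gen_choiceMixin (cs_ring A).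
HB.instance Definition _ (A : CStarAlgebra) := @GRing.isPzRing.Build (cs_ring A)
  (cs_zero A) (@cs_opp A) (@cs_add A) (cs_one A) (@cs_mul A)
  (fun x y z => cs_addA x y z) (@cs_addC A)
  (fun x => etrans (cs_addC _ x) (cs_add0 x)) (fun x => etrans (cs_addC _ x) (cs_addN x))
  (fun x y z => cs_mulA x y z) (@cs_mul1l A) (@cs_mul1r A) (@cs_mulDl A) (@cs_mulDr A).

Section Involution.
Local Open Scope ring_scope.
Variable A : CStarAlgebra.
Implicit Types x y a b : cs_ring A.

Definition star x : cs_ring A := cs_star x.

Lemma starM x y : star (x * y) = star y * star x. Proof. exact: cs_starM. Qed.
Lemma starK : involutive star. Proof. exact: cs_starK. Qed.
Lemma starD x y : star (x + y) = star x + star y. Proof. exact: cs_starD. Qed.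

Lemma star0 : star 0 = 0.
Proof. by apply: (@addrI _ (star 0)); rewrite -starD !addr0. Qed.

Lemma starB x y : star (x - y) = star x - star y.
Proof.
have starN z : star (- z) = - star z.
  by apply: (@addrI _ (star z)); rewrite -starD !subrr star0.
by rewrite starD starN.
Qed.

Lemma cs_norm0 : cs_norm (0 : cs_ring A) = R0.
Proof.
pose z : cs_ring A := cs_scal C0 (0 : cs_ring A).
have z0 : z = 0.
  apply: (@addrI _ z); rewrite addr0 {3}/z.
  have -> : C0 = Cadd C0 C0 by rewrite /Cadd /C0 /= Rplus_0_l.
  exact: esym (cs_scalDl _ _ _).
by rewrite -z0 /z cs_normZ /Cmod /C0 /= Rmult_0_l Rplus_0_l sqrt_0 Rmult_0_l.
Qed.

Lemma mul_star_eq0 x : x * star x = 0 -> x = 0.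
Proof.
move=> xx0; have nx : cs_norm (x * star x) = Rmult (cs_norm (star x)) (cs_norm (star x)).
  by rewrite -{1}(starK x); exact: cs_cstar.
rewrite xx0 cs_norm0 in nx.
have sx0 : star x = 0 by apply: cs_norm_eq0; case: (Rmult_integral _ _ (esym nx)).
by rewrite -(starK x) sx0 star0.
Qed.

Lemma selfadjoint_commute a b : star a = a -> star b = b ->
  a * b = a * b * a -> GRing.comm a b.
Proof.
move=> sa sb aba; have := congr1 star aba.
by rewrite /GRing.comm !starM sa sb mulrA -aba => ->.
Qed.

End Involution.

Section QuantumAutomorphism.
Local Open Scope ring_scope.
Variables (V : finType) (E : rel V) (A : CStarAlgebra).

Lemma qaut_relations_tr (u : V -> V -> cs_ring A) :
  qaut_relations E u -> qaut_relations E (fun i j => u j i).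
Proof.
case=> proj [sums orth]; split; [|split] => [i j|i|i j k l ikjl]; first exact: proj.
  by have [] := sums i.
by apply: (orth j i l k); rewrite addbC.
Qed.

Variables (u : V -> V -> cs_ring A) (hu : qaut_relations E u).

Lemma qaut_idem i j : u i j * u i j = u i j.
Proof. by case: hu => proj _; case: (proj i j). Qed.

Lemma qaut_star i j : star (u i j) = u i j.
Proof. by case: hu => proj _; case: (proj i j). Qed.

Lemma qaut_row_sum i : \sum_t u i t = 1.
Proof. by case: hu => _ [sums _]; case: (sums i). Qed.

Lemma qaut_col_sum j : \sum_t u t j = 1.
Proof. by case: hu => _ [sums _]; case: (sums j). Qed.

Lemma qaut_mul_eq0 i j k l : E i k (+) E j l -> u i j * u k l = 0.
Proof. by case: hu => _ [_ orth] /orth []. Qed.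

Lemma qaut_mul_adj_eq0 i j k l : E i k -> ~~ E j l -> u i j * u k l = 0.
Proof. by move=> ik jl; rewrite qaut_mul_eq0 // ik (negbTE jl). Qed.

Lemma mul_qaut_row_sum p x y : x * y = \sum_t x * u p t * y.
Proof. by rewrite -{1}[x]mulr1 -(qaut_row_sum p) mulr_sumr mulr_suml. Qed.

Lemma mul_qaut_col_sum q x y : x * y = \sum_t x * u t q * y.
Proof. by rewrite -{1}[x]mulr1 -(qaut_col_sum q) mulr_sumr mulr_suml. Qed.

Hypothesis E_sym : symmetric E.

Lemma qaut_row_orth (twin_free : forall j l, j != l -> exists t, E j t != E l t) i j l :
  j != l -> u i j * u i l = 0.
Proof.
move=> jl; have [t jtlt] := twin_free j l jl.
rewrite (mul_qaut_col_sum t) big1 // => k _.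
case: (boolP (E i k (+) E j t)) => [ikjt | ikjt]; first by rewrite qaut_mul_eq0 ?mul0r.
rewrite -mulrA qaut_mul_eq0 ?mulr0 // E_sym [E t l]E_sym.
by move: ikjt jtlt; case: (E i k); case: (E j t); case: (E l t).
Qed.

Lemma qaut_commute_of_absorb i j b : star b = b ->
  (forall s, s != j -> u i j * b * u i s = 0) -> GRing.comm (u i j) b.
Proof.
move=> sb absorb; apply: selfadjoint_commute => //; first exact: qaut_star.
rewrite -{1}[_ * b]mulr1 -(qaut_row_sum i) mulr_sumr (bigD1 j) //= big1 ?addr0 //.
Qed.

End QuantumAutomorphism.

Section HammingQuantumAutomorphism.
Local Open Scope ring_scope.
Variables (d : nat) (A : CStarAlgebra).
Local Notation V := (hamming_vertex d 3).
Local Notation E := (hamming_adj d 3).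

Lemma qaut_mul_hdist_lt (u : V -> V -> cs_ring A) : qaut_relations E u ->
  forall i j k l, hdist i k < hdist j l -> u i j * u k l = 0.
Proof.
move=> hu i j k l; have [n ik] : exists n, hdist i k = n by exists (hdist i k).
elim: n i j ik => [|n IH] i j ik; rewrite ik => lt.
  move/eqP: ik; rewrite hdist_eq0 => /eqP <-.
  apply: (qaut_row_orth hu (@hamming_adj_sym d 3) (hamming_twin_free (isT : 2 < 3))) => //.
  by rewrite -hdist_eq0 -lt0n.
have /exists_closer_neighbour [p ip pk] : 0 < hdist i k by rewrite ik.
rewrite (mul_qaut_row_sum hu p) big1 // => t _.
case: (boolP (E j t)) => jt; last by rewrite (qaut_mul_adj_eq0 hu ip jt) mul0r.
rewrite -mulrA IH ?mulr0 //; first by move: pk; rewrite ik => -[].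
by have := hdist_adj_le l (_ : E t j); rewrite hamming_adj_sym => /(_ jt); lia.
Qed.

Variables (u : V -> V -> cs_ring A) (hu : qaut_relations E u).

Lemma qaut_mul_hdist_neq i j k l : hdist i k != hdist j l -> u i j * u k l = 0.
Proof.
case: ltngtP => // [lt | gt] _; first exact: qaut_mul_hdist_lt.
exact: (qaut_mul_hdist_lt (qaut_relations_tr hu)).
Qed.

Lemma qaut_commute_adj i j k l : E i k -> E j l -> GRing.comm (u i j) (u k l).
Proof.
move=> ik jl; have ki : E k i by rewrite hamming_adj_sym.
have [p /andP [ip kp]] := exists_common_neighbour (isT : 2 < 3) ik.
have [q /andP [jq lq]] := exists_common_neighbour (isT : 2 < 3) jl.
have [pi pk] : E p i /\ E p k by rewrite !(hamming_adj_sym p).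
have uniq := @hamming3_common_neighbour_uniq d.
set a := u i j; set b := u k l; set c := u p q.
have bca : b * (c * a) = b * a.
  rewrite mulrA [RHS](mul_qaut_row_sum hu p) (bigD1 q) //= big1 ?addr0 // => t tq.
  case: (boolP (E l t)) => lt; last by rewrite (qaut_mul_adj_eq0 hu kp lt) mul0r.
  case: (boolP (E t j)) => tj; last by rewrite -mulrA (qaut_mul_adj_eq0 hu pi tj) mulr0.
  by case/eqP: tq; apply: (uniq j l) => //; rewrite hamming_adj_sym.
have cba : c * (b * a) = c * a.
  rewrite mulrA [RHS](mul_qaut_row_sum hu k) (bigD1 l) //= big1 ?addr0 // => w wl.
  case: (boolP (E q w)) => qw; last by rewrite (qaut_mul_adj_eq0 hu pk qw) mul0r.
  case: (boolP (E w j)) => wj; last by rewrite -mulrA (qaut_mul_adj_eq0 hu ki wj) mulr0.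
  by case/eqP: wl; apply: (uniq j q) => //; rewrite hamming_adj_sym.
have abc : a * b = a * c.
  apply/eqP; rewrite -subr_eq0; apply/eqP/mul_star_eq0.
  rewrite starB !starM !(qaut_star hu) mulrBl !mulrBr -!mulrA.
  by rewrite -/a -/b -/c (mulrA b b) (mulrA c c) !(qaut_idem hu) -/b -/c bca cba !subrr.
apply: (qaut_commute_of_absorb hu); first exact: (qaut_star hu).
move=> s sj; case: (boolP (E l s)) => ls.
  rewrite abc; case: (boolP (E q s)) => qs.
    by case/eqP: sj; apply: (uniq l q) => //; rewrite hamming_adj_sym.
  by rewrite -mulrA (qaut_mul_adj_eq0 hu pi qs) mulr0.
by rewrite -mulrA (qaut_mul_adj_eq0 hu ki ls) mulr0.
Qed.

Lemma qaut_commute_far i j k l : 1 < hdist i k -> hdist j l = hdist i k ->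
    (forall x y z w, hdist x z < hdist i k -> GRing.comm (u x y) (u z w)) ->
  GRing.comm (u i j) (u k l).
Proof.
move=> far jl IH; apply: (qaut_commute_of_absorb hu); first exact: (qaut_star hu).
move=> s sj; case: (eqVneq (hdist k i) (hdist l s)) => [ls | ls]; last first.
  by rewrite -mulrA qaut_mul_hdist_neq ?mulr0.
set X := u i j * u k l * u i s.
have [p1 [p2 [p12 ip1 ip2 p1k p2k]]] := two_closer_neighbours far.
have X_comm p t : E i p -> (hdist p k).+1 = hdist i k -> GRing.comm (u p t) X.
  move=> ip pk; have pi1 : hdist p i < hdist i k by rewrite hdistC hdist_adj.
  by do ![apply: commrM]; apply: IH; rewrite // -pk.
pose good t := [&& E j t, E s t & (hdist t l).+1 == hdist j l].
have X_vanish p t : E i p -> (hdist p k).+1 = hdist i k -> ~~ good t -> X * u p t = 0.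
  move=> ip pk; have pi : E p i by rewrite hamming_adj_sym.
  case: (boolP (E j t)) => [jt | jt _]; last first.
    have tj : ~~ E t j by rewrite hamming_adj_sym.
    by rewrite -X_comm // !mulrA (qaut_mul_adj_eq0 hu pi tj) !mul0r.
  case: (boolP (E s t)) => [st | st _]; last first.
    by rewrite -mulrA (qaut_mul_adj_eq0 hu ip st) mulr0.
  move=> tl; rewrite /X -mulrA -(IH p t i s); last by rewrite hdistC hdist_adj.
  rewrite mulrA -(mulrA _ (u k l)) qaut_mul_hdist_neq ?mulr0 ?mul0r //.
  by apply: contra tl => /eqP kp; rewrite /good jt st /= [hdist t l]hdistC -kp hdistC pk jl.
rewrite -[X]mulr1 -(qaut_row_sum hu p1) mulr_sumr big1 // => t _.
rewrite -[X * _]mulr1 -(qaut_row_sum hu p2) mulr_sumr big1 // => t' _.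
case: (eqVneq t t') => [<- | tt'].
  by rewrite -mulrA qaut_mul_hdist_neq ?mulr0 // hdistxx hdist_eq0.
case: (boolP (good t)) => [/and3P [jt st /eqP tl] | bad]; last by rewrite X_vanish ?mul0r.
case: (boolP (good t')) => [/and3P [jt' st' /eqP t'l] | bad]; last first.
  by rewrite -X_comm // -mulrA X_vanish ?mulr0.
case/eqP: sj; apply: (eq_of_closer_common_neighbours (l := l) tt') => //.
by rewrite hdistC -ls hdistC jl.
Qed.

Lemma qaut_commute i j k l : GRing.comm (u i j) (u k l).
Proof.
have [n] := ubnP (hdist i k); elim: n => // n IH in i j k l *; rewrite ltnS => ikn.
have [jl | ikjl] := eqVneq (hdist j l) (hdist i k); last first.
  rewrite /GRing.comm !qaut_mul_hdist_neq // eq_sym //.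
  by rewrite hdistC [hdist k i]hdistC.
case ik: (hdist i k) jl ikn => [|[|m]] jl ikn.
- move/eqP: ik; move/eqP: jl; rewrite !hdist_eq0 => /eqP <- /eqP <-.
  exact: commr_refl.
- by apply: qaut_commute_adj; rewrite hamming_adjE ?ik ?jl.
- apply: qaut_commute_far; rewrite ?ik ?jl // => x y z w xz.
  by apply: IH; apply: leq_trans ikn.
Qed.

End HammingQuantumAutomorphism.

Theorem theorem4p5 : forall d : nat, no_quantum_symmetry (hamming_adj d 3).
Proof. by move=> d A u hu i j k l; apply: (qaut_commute (u := u)). Qed.
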